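(* Let $k\ge 2$ and let $m_1<m_2<\dots<m_k$ be positive integers. Then the complete $k$-partite graph $K_{m_1,m_2,\dots,m_k}$ satisfies $IDI(K_{m_1,m_2,\dots,m_k})=m_k$.
   Context: $K_{m_1,\dots,m_k}$ is the complete $k$-partite graph whose parts have sizes $m_1,\dots,m_k$. For a finite simple connected graph $G=(V,E)$ with diameter $d$, a rank assignment is a function $f:V\to\mathbb{R}$; under $f$, the string of a vertex $v$ is the $d$-vector whose $i$-th coordinate is the sum of $f(w)$ over all vertices $w$ with $d(v,w)=i$. The ID-index $IDI(G)$ is the minimum $k$ such that there exists $f:V\to\mathbb{R}$ with $|f(V)|=k$ under which all vertices have distinct strings. *)

From HB Require Import structures.
From mathcomp Require Import all_boot all_order all_algebra.
From mathcomp Require Import Rstruct.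
From Stdlib Require Import Rdefinitions.
Set Implicit Arguments. Unset Strict Implicit. Unset Printing Implicit Defensive.
Import GRing.Theory.
Local Open Scope ring_scope.
Notation R := Rdefinitions.R.

Section Graph.
Variables (T : finType) (adj : rel T).

Fixpoint ball (n : nat) (x : T) : {set T} :=
  match n with
  | 0 => [set x]
  | n'.+1 => ball n' x :|: [set y | [exists z in ball n' x, adj z y]]
  end.

(* graph distance: least n with y in ball n x (#|T| if unreachable) *)
Definition dist (x y : T) : nat := find (fun n => y \in ball n x) (iota 0 #|T|).

Definition connected_graph : Prop := forall x y : T, y \in ball #|T| x.

Definition diameter : nat := \max_(x : T) \max_(y : T) dist x y.

Definition vstring (f : T -> R) (v : T) : seq R :=
  [seq \sum_(w : T | dist v w == i) f w | i <- iota 1 diameter].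

Definition distinct_strings (f : T -> R) : Prop := injective (vstring f).

Definition num_ranks (f : T -> R) : nat := size (undup (codom f)).

Definition IDI_is (k : nat) : Prop :=
  (exists f : T -> R, distinct_strings f /\ num_ranks f = k) /\
  (forall f : T -> R, distinct_strings f -> leq k (num_ranks f)).
End Graph.

(* complete k-partite graph with parts of sizes m 0, ..., m (k-1) *)
Definition kpart_vertex (k : nat) (m : nat -> nat) : finType := {i : 'I_k & 'I_(m i)}.

Definition kpart_adj (k : nat) (m : nat -> nat) : rel (kpart_vertex k m) :=
  fun x y => tag x != tag y.
Arguments kpart_adj k m : clear implicits.

(** In [K_{m_1,...,m_k}] two vertices of the same part are exchanged by a graph
    automorphism, so if they receive the same rank they have the same string:
    any distinguishing assignment is injective on every part and uses at least
    [m_k] ranks. Conversely, rank each vertex by its index [0, ..., m_i - 1]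
    inside its part [i]. The part then has rank sum [C(m_i, 2)]; the first
    coordinate of a string is the total rank sum minus the rank sum of the
    vertex's part, which determines the part because the [m_i] are distinct,
    and the second is that part sum minus the vertex's own rank, which
    determines the vertex. This uses exactly [m_k] ranks. *)
From HB Require Import structures.
From mathcomp Require Import all_boot all_order all_algebra all_fingroup.
From mathcomp Require Import Rstruct.
From Stdlib Require Import Rdefinitions.
Import GRing.Theory Num.Theory.

Lemma ltn_bin2 a b : 0 < a -> a < b -> 'C(a, 2) < 'C(b, 2).
Proof.
move=> a_gt0 ab; apply: leq_trans (leq_bin2l 2 ab).
by rewrite binS bin1 -addn1 leq_add2l.
Qed.

Lemma bin2_inj a b : 0 < a -> 0 < b -> 'C(a, 2) = 'C(b, 2) -> a = b.
Proof.
move=> a_gt0 b_gt0 ab; case: (ltngtP a b) => // [lt|gt].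
  by have := ltn_bin2 _ _ a_gt0 lt; rewrite ab ltnn.
by have := ltn_bin2 _ _ b_gt0 gt; rewrite ab ltnn.
Qed.

Lemma leq_mono_of_ltS (f : nat -> nat) (k : nat) :
  (forall i, i.+1 < k -> f i < f i.+1) ->
  {in [pred i | i < k] &, {mono f : i j / i <= j}}.
Proof.
move=> f_incr; apply: leq_mono_in; apply: homo_ltn_in => [y x z| |i _]; rewrite ?inE.
- exact: ltn_trans.
- by move=> i j _ jk l /andP[_ lj]; rewrite !inE in jk *; exact: ltn_trans lj jk.
- exact: f_incr.
Qed.

Lemma card_le_num_ranks (S T : finType) (f : T -> R) (h : S -> T) :
  injective (f \o h) -> #|S| <= num_ranks f.
Proof.
move=> fh_inj; rewrite cardE -(size_map (f \o h)) /num_ranks.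
apply: uniq_leq_size; first by rewrite (map_inj_uniq fh_inj) enum_uniq.
by move=> _ /mapP[s _ ->]; rewrite mem_undup /= codom_f.
Qed.

Section GraphDistance.
Variables (T : finType) (adj : rel T).

Lemma dist_eq_first_ball n x y : n < #|T| -> y \in ball adj n x ->
  (forall j, j < n -> y \notin ball adj j x) -> dist adj x y = n.
Proof.
move=> n_lt y_n y_lt; rewrite /dist -(subnKC (ltnW n_lt)) iotaD find_cat.
have -> : has (fun j => y \in ball adj j x) (iota 0 n) = false.
  by apply/hasPn => j; rewrite mem_iota => /y_lt.
have -> : #|T| - n = (#|T| - n.+1).+1 by rewrite subnS prednK // subn_gt0.
by rewrite /= y_n size_iota addn0.
Qed.

Local Open Scope ring_scope.

Lemma nth_vstring (f : T -> R) v n : (n < diameter adj)%nat ->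
  nth 0 (vstring adj f v) n = \sum_(w | dist adj v w == n.+1) f w.
Proof. by move=> n_lt; rewrite (nth_map 0%nat) ?size_iota ?nth_iota. Qed.

Section Automorphism.
Variable s : {perm T}.
Hypothesis adj_perm : forall x y, adj (s x) (s y) = adj x y.

Lemma ball_perm n x y : (s y \in ball adj n (s x)) = (y \in ball adj n x).
Proof.
elim: n y => [|n IHn] y /=; first by rewrite !inE (inj_eq perm_inj).
rewrite !inE IHn; congr (_ || _); apply/existsP/existsP => [[z]|[z]].
  by rewrite -(permKV s z) IHn adj_perm => ?; exists (s^-1 z)%g.
by rewrite -IHn -(adj_perm z) => ?; exists (s z).
Qed.

Lemma dist_perm x y : dist adj (s x) (s y) = dist adj x y.
Proof. by apply: eq_find => n; rewrite ball_perm. Qed.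

Lemma vstring_perm (f : T -> R) x :
  (forall w, f (s w) = f w) -> vstring adj f (s x) = vstring adj f x.
Proof.
move=> f_perm; apply: eq_map => i; rewrite (reindex_inj (@perm_inj _ s)) /=.
by apply: eq_big => [w|w _]; rewrite ?dist_perm ?f_perm.
Qed.

End Automorphism.
End GraphDistance.

Section CompleteMultipartite.
Variables (k : nat) (m : nat -> nat).

Local Notation V := (kpart_vertex k m).
Local Notation adj := (kpart_adj k m).
Local Open Scope ring_scope.

Definition part_vertex (i : 'I_k) (j : 'I_(m i)) : V := Tagged (fun i : 'I_k => 'I_(m i)) j.

Definition part_index (v : V) : R := (tagged v : nat)%:R.

Lemma tag_tperm (x y z : V) : tag x = tag y -> tag (tperm x y z) = tag z.
Proof. by move=> xy; case: tpermP => [->|->|] //; rewrite xy. Qed.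

Lemma vstring_part_swap (f : V -> R) (x y : V) : tag x = tag y -> f x = f y ->
  vstring adj f x = vstring adj f y.
Proof.
move=> xy fxy; rewrite -[in RHS](tpermL x y); symmetry; apply: vstring_perm.
  by move=> a b; rewrite /kpart_adj !tag_tperm.
by move=> w; case: tpermP => [->|->|].
Qed.

Lemma part_size_le_num_ranks (f : V -> R) (i : 'I_k) :
  distinct_strings adj f -> (m i <= num_ranks f)%nat.
Proof.
move=> f_dist; rewrite -[m i]card_ord.
apply: (@card_le_num_ranks _ _ _ (part_vertex i)).
move=> a b fab; apply: (@eq_from_Tagged _ (fun i : 'I_k => 'I_(m i))).
exact: f_dist (vstring_part_swap f (part_vertex i a) (part_vertex i b) erefl fab).
Qed.

Lemma num_ranks_part_index (i : 'I_k) :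
  (forall j : 'I_k, (m j <= m i)%nat) -> num_ranks part_index = m i.
Proof.
move=> m_le; have -> : m i = size [seq n%:R : R | n <- iota 0 (m i)].
  by rewrite size_map size_iota.
rewrite /num_ranks.
apply/perm_size/uniq_perm; rewrite ?undup_uniq ?iota_uniq //.
  by rewrite (map_inj_uniq (mulrIn (oner_neq0 R))) iota_uniq.
move=> r; rewrite mem_undup; apply/codomP/mapP => [[v ->]|[n]].
  by exists (tagged v : nat); rewrite // mem_iota (leq_trans (ltn_ord _)).
by rewrite mem_iota add0n => n_lt ->; exists (part_vertex i (Ordinal n_lt)).
Qed.

Lemma sum_part_index (i : 'I_k) :
  \sum_(w : V | tag w == i) part_index w = ('C(m i, 2))%:R.
Proof.
rewrite -bin2_sum big_mkord natr_sum.
rewrite (big_tag (fun (i : 'I_k) (j : 'I_(m i)) => (j : nat)%:R : R) i).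
apply: eq_big => // w /eqP e.
by rewrite (untagE _ _ e); case: w e => /= i' j e; subst i.
Qed.

Hypothesis two_parts : (1 < k)%nat.
Hypothesis parts_nonempty : forall i : 'I_k, (0 < m i)%nat.

Lemma two_distinct_parts : exists a b : 'I_k, a != b.
Proof.
have [a [b [_ _ ab]]] : exists a b : 'I_k, [/\ a \in 'I_k, b \in 'I_k & a != b].
  by apply/card_gt1P; rewrite card_ord.
by exists a, b.
Qed.

Lemma other_part_vertex (x : V) : exists z : V, tag x != tag z.
Proof.
have [a [b ab]] := two_distinct_parts.
have [c xc] : exists c, tag x != c.
  by case: (eqVneq (tag x) a) => [->|]; [exists b | exists a].
by exists (part_vertex c (Ordinal (parts_nonempty c))).
Qed.

Lemma mem_kpart_ball1 (x y : V) : (y \in ball adj 1 x) = (y == x) || (tag x != tag y).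
Proof.
rewrite /= !inE; congr (_ || _).
by apply/existsP/idP => [[z /andP[/set1P-> //]]|xy]; exists x; rewrite set11.
Qed.

Lemma mem_kpart_ball2 (x y : V) : y \in ball adj 2 x.
Proof.
rewrite inE mem_kpart_ball1 /= !inE.
case: (eqVneq (tag x) (tag y)) => [xy|]; last by rewrite orbT.
have [z xz] := other_part_vertex x.
apply/orP; right; apply/existsP; exists z.
by rewrite mem_kpart_ball1 xz orbT /kpart_adj -xy eq_sym.
Qed.

Lemma kpart_dist (x y : V) :
  dist adj x y = if y == x then 0%nat else if tag x != tag y then 1%nat else 2%nat.
Proof.
case: (eqVneq y x) => [->|yx].
  by apply: dist_eq_first_ball; rewrite ?inE //; apply/card_gt0P; exists x.
case: ifPn => [xy|/negPn/eqP xy].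
  apply: dist_eq_first_ball => [||[|] // _]; rewrite ?mem_kpart_ball1 ?xy ?orbT ?inE //.
  by apply/card_gt1P; exists x, y; rewrite eq_sym yx.
have [z xz] := other_part_vertex x.
apply: dist_eq_first_ball => [||[|[|]] // _].
- apply/card_gt2P; exists x, y, z; split=> //; split; first by rewrite eq_sym.
    by apply: contraNneq xz => <-; rewrite xy.
  by apply: contraNneq xz => ->.
- exact: mem_kpart_ball2.
- by rewrite inE.
- by rewrite mem_kpart_ball1 (negbTE yx) xy eqxx.
Qed.

Lemma sum_dist1_add_part (f : V -> R) v :
  \sum_(w | dist adj v w == 1%nat) f w + \sum_(w | tag w == tag v) f w = \sum_w f w.
Proof.
rewrite [RHS](bigID (fun w : V => tag w == tag v)) addrC; congr (_ + _).
apply: eq_bigl => w; rewrite kpart_dist.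
case: (eqVneq w v) => [->|_]; first by rewrite !eqxx.
by rewrite [tag w == _]eq_sym; case: (tag v == tag w).
Qed.

Lemma sum_part_dist2 (f : V -> R) v :
  \sum_(w | tag w == tag v) f w = f v + \sum_(w | dist adj v w == 2%nat) f w.
Proof.
rewrite (bigD1 v) //=; congr (_ + _); apply: eq_bigl => w; rewrite kpart_dist.
case: (eqVneq w v) => [->|_]; first by rewrite !eqxx andbF.
by rewrite andbT [tag w == _]eq_sym; case: (tag v == tag w).
Qed.

Hypothesis part_sizes_distinct : injective (fun i : 'I_k => m i).

Lemma kpart_diameter_ge2 : (2 <= diameter adj)%nat.
Proof.
have [i m_i_gt1] : exists i : 'I_k, (1 < m i)%nat.
  have [a [b ab]] := two_distinct_parts.
  case: (ltngtP (m a) (m b)) => [lt|gt|/part_sizes_distinct eq_ab].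
  - by exists b; apply: leq_ltn_trans lt.
  - by exists a; apply: leq_ltn_trans gt.
  - by rewrite eq_ab eqxx in ab.
pose x := part_vertex i (Ordinal (ltnW m_i_gt1)).
pose y := part_vertex i (Ordinal m_i_gt1).
apply: leq_trans (leq_bigmax x); apply: leq_trans (leq_bigmax y).
by rewrite kpart_dist /= eqxx; case: eqP => // /eq_from_Tagged.
Qed.

Lemma distinct_strings_part_index : distinct_strings adj part_index.
Proof.
move=> v w vw.
have ge2 := kpart_diameter_ge2.
have s1 := congr1 (nth 0 ^~ 0%nat) vw; have s2 := congr1 (nth 0 ^~ 1%nat) vw.
rewrite /= !nth_vstring ?(leq_trans _ ge2) // in s1 s2.
have eq_part_sums :
    \sum_(u | tag u == tag v) part_index u = \sum_(u | tag u == tag w) part_index u.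
  apply: (addrI (\sum_(u | dist adj v u == 1%nat) part_index u)).
  by rewrite sum_dist1_add_part s1 sum_dist1_add_part.
have vw_part : tag v = tag w.
  apply/part_sizes_distinct/bin2_inj; rewrite ?parts_nonempty //.
  by apply/eqP; rewrite -(eqr_nat R) -!sum_part_index eq_part_sums.
have : part_index v = part_index w.
  apply: (addIr (\sum_(u | dist adj v u == 2%nat) part_index u)).
  by rewrite -sum_part_dist2 s2 -sum_part_dist2.
move/eqP; rewrite eqr_nat => /eqP.
by case: v w vw_part {vw s1 s2 eq_part_sums} => [i a] [j b] /= eij; subst j => /val_inj ->.
Qed.

End CompleteMultipartite.

Theorem mainTheorem12 (k : nat) (m : nat -> nat) :
  2 <= k ->
  (forall i, i < k -> 0 < m i) ->
  (forall i, i.+1 < k -> m i < m i.+1) ->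
  IDI_is (kpart_adj k m) (m k.-1).
Proof.
move=> k_ge2 m_gt0 m_incr.
have m_mono := leq_mono_of_ltS m k m_incr.
have m_inj : injective (fun i : 'I_k => m i).
  by move=> i j /eqP; rewrite eqn_leq !m_mono ?inE // -eqn_leq => /eqP /val_inj.
have last_lt : k.-1 < k by rewrite prednK // ltnW.
have m_le_last (j : 'I_k) : m j <= m (Ordinal last_lt).
  by rewrite m_mono ?inE //= -ltnS (prednK (ltnW k_ge2)).
have parts_nonempty (i : 'I_k) : 0 < m i by exact: m_gt0.
split.
  exists (@part_index k m); split.
    exact: (@distinct_strings_part_index k m k_ge2 parts_nonempty m_inj).
  exact: (@num_ranks_part_index k m _ m_le_last).
by move=> f f_dist; exact: (@part_size_le_num_ranks k m f (Ordinal last_lt) f_dist).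
Qed.
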